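(* Let $\mathbf{T}$ and $\mathbf{T}'$ be distributive lattices and let $f:\mathbf{T}\to\mathbf{T}'$ be a morphism of distributive lattices. Let $\operatorname{Spec}(f):\operatorname{Spec}\mathbf{T}'\to\operatorname{Spec}\mathbf{T}$ be the dual map, $\mathfrak{q}\mapsto f^{-1}(\mathfrak{q})$. In classical mathematics, the following are equivalent. 1. $\operatorname{Spec}(f)$ is an open map. 2. There exists a map $\tilde f:\mathbf{T}'\to\mathbf{T}$ with the following properties: (a) for all $c\in\mathbf{T}$ and $b\in\mathbf{T}'$, $b\le f(c)\iff \tilde f(b)\le c$ (in particular $b\le f(\tilde f(b))$ and $\tilde f(b_1\vee b_2)=\tilde f(b_1)\vee\tilde f(b_2)$); (b) for all $a,c\in\mathbf{T}$ and $b\in\mathbf{T}'$, $f(a)\wedge b\le f(c)\iff a\wedge\tilde f(b)\le c$; (c) for all $a\in\mathbf{T}$ and $b\in\mathbf{T}'$, $\tilde f(f(a)\wedge b)=a\wedge\tilde f(b)$; (d) for all $a\in\mathbf{T}$, $\tilde f(f(a))=\tilde f(1)\wedge a$. 3. There exists a map $\tilde f:\mathbf{T}'\to\mathbf{T}$ satisfying property (b) above. 4. For every $b\in\mathbf{T}'$ the greatest lower bound $\bigwedge_{c\in\mathbf{T},\ b\le f(c)} c$ exists in $\mathbf{T}$, and, writing $\tilde f(b)$ for it, property (b) above holds.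
   Context: A prime ideal of a distributive lattice $\mathbf{T}\neq\mathbf{1}$ is an ideal whose complement is a filter; equivalently it corresponds to a lattice morphism $\mathbf{T}\to\mathbf{2}$. The spectrum $\operatorname{Spec}\mathbf{T}$ is the set of prime ideals of $\mathbf{T}$ with the topology having as basis of open sets the sets $\mathfrak{D}_{\mathbf{T}}(a)=\{\mathfrak{p}\in\operatorname{Spec}\mathbf{T}\mid a\notin\mathfrak{p}\}$ for $a\in\mathbf{T}$. A map is open if it sends open sets to open sets. *)

From HB Require Import structures.
From mathcomp Require Import all_boot all_order.
From mathcomp Require Import classical_sets.
Set Implicit Arguments. Unset Strict Implicit. Unset Printing Implicit Defensive.
Import Order.TTheory.
Local Open Scope order_scope.
Local Open Scope classical_set_scope.

Section Spec.
Variables (d : Order.disp_t) (T : tbDistrLatticeType d).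

Definition lattice_ideal (p : set T) : Prop :=
  [/\ p \bot,
      (forall x y : T, x <= y -> p y -> p x) &
      (forall x y : T, p x -> p y -> p (Order.join x y))].

Definition lattice_filter (F : set T) : Prop :=
  [/\ F \top,
      (forall x y : T, x <= y -> F x -> F y) &
      (forall x y : T, F x -> F y -> F (Order.meet x y))].

Definition prime_ideal (p : set T) : Prop :=
  lattice_ideal p /\ lattice_filter (~` p).

Definition Spec := {p : set T | prime_ideal p}.

Definition D_open (a : T) : set Spec := [set p | ~ (proj1_sig p) a].

(* Topology generated by the basis {D_T(a)}: U is open iff it is a union of
   basic opens, i.e. every point of U lies in some D_T(a) contained in U. *)
Definition spec_open (U : set Spec) : Prop :=
  forall p : Spec, U p -> exists a : T, D_open a p /\ D_open a `<=` U.

End Spec.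

Section SpecMap.
Variables (d d' : Order.disp_t) (T : tbDistrLatticeType d)
  (T' : tbDistrLatticeType d').

Lemma preimage_prime (f : {lmorphism T -> T'}) :
  f \bot = \bot -> f \top = \top ->
  forall q : set T', prime_ideal q -> prime_ideal (f @^-1` q).
Proof.
move=> f0 f1 q [[q0 qd qU] [q1 qu qI]]; split; split.
- by rewrite /preimage /= f0.
- by move=> x y xy; apply: qd; apply: omorph_le.
- by move=> x y qx qy; rewrite /preimage /= omorphU; apply: qU.
- by rewrite /preimage /setC /= f1.
- by move=> x y xy; apply: qu; apply: omorph_le.
- by move=> x y qx qy; rewrite /preimage /setC /= omorphI; apply: qI.
Qed.

Definition Spec_map (f : {lmorphism T -> T'}) (f0 : f \bot = \bot)
  (f1 : f \top = \top) (q : Spec T') : Spec T :=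
  exist _ (f @^-1` proj1_sig q) (preimage_prime f0 f1 (proj2_sig q)).

End SpecMap.

Definition open_map d d' (T : tbDistrLatticeType d) (T' : tbDistrLatticeType d')
  (g : Spec T' -> Spec T) : Prop :=
  forall U : set (Spec T'), spec_open U -> spec_open (g @` U).

Definition is_glb d (T : tbDistrLatticeType d) (S : set T) (m : T) : Prop :=
  (forall c, S c -> m <= c) /\ (forall m', (forall c, S c -> m' <= c) -> m' <= m).

From HB Require Import structures.
From mathcomp Require Import all_boot all_order.
From mathcomp Require Import classical_sets boolp.
Import Order.TTheory.
Local Open Scope order_scope.
Local Open Scope classical_set_scope.

Set Implicit Arguments. Unset Strict Implicit.

(* Write g for Spec(f).  Since a <= c iff D(a) is contained in D(c) (prime
   ideal theorem) and D(f a) is the preimage of D(a) under g, property (b) of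
   ft says exactly that g maps each D(b) onto D(ft b): it is the translation of
   [g @^-1` A `&` B `<=` g @^-1` C <-> A `&` g @` B `<=` C].  Such a g is
   open, and conversely if g is open then the image of the compact set D(b) is
   a compact open, hence a basic open.  Properties (a), (c), (d) and the
   description of ft b as an infimum follow from (b) by order theory alone. *)

Section PrimeIdealTheorem.
Variables (d : Order.disp_t) (T : tbDistrLatticeType d).
Variables (I F : set T).
Hypotheses (idealI : lattice_ideal I) (filterF : lattice_filter F)
  (disjIF : forall z, I z -> ~ F z).

(* Ideals containing [I] and avoiding [F], plus [set0] so that the empty
   chain has an upper bound in Zorn's lemma. *)
Let admissible (X : set T) :=
  [/\ (forall x y, x <= y -> X y -> X x),
      (forall x y, X x -> X y -> X (x `|` y)%O),
      (forall z, X z -> ~ F z) & X = set0 \/ I `<=` X].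

Lemma admissible_maximal_exists :
  exists M, admissible M /\ forall B, M `<` B -> ~ admissible B.
Proof.
apply: Zorn_bigcup => C CP Ctot; split.
- move=> x y xy [X CX Xy]; exists X => //.
  by case: (CP X CX) => Xd _ _ _; apply: Xd xy Xy.
- move=> x y [X CX Xx] [Y CY Yy].
  have [XY|YX] := Ctot X Y CX CY.
  + by exists Y => //; case: (CP Y CY) => _ YU _ _; apply: YU => //; apply: XY.
  + by exists X => //; case: (CP X CX) => _ XU _ _; apply: XU => //; apply: YX.
- by move=> z [X CX Xz]; case: (CP X CX) => _ _ XF _; apply: XF.
- have [[X CX IX]|noI] := pselect (exists2 X, C X & I `<=` X).
    by right => z Iz; exists X => //; apply: IX.
  left; apply/seteqP; split => // z [X CX Xz].
  have [_ _ _ [X0|IX]] := CP X CX; first by rewrite X0 in Xz.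
  by case: noI; exists X.
Qed.

Section Maximal.
Variable M : set T.
Hypotheses (admM : admissible M) (maxM : forall B, M `<` B -> ~ admissible B).

Lemma maximal_admissible_sup : I `<=` M.
Proof.
case: admM => _ _ _ [M0|//]; case: (maxM (B := I)); last first.
  by case: idealI => _ Id IU; split => //; right.
by rewrite M0; split => // /(_ \bot); apply; case: idealI.
Qed.

Lemma notin_maximal_admissible x :
  ~ M x -> exists2 m, M m & exists2 z, F z & z <= (m `|` x)%O.
Proof.
move=> nMx; case: admM => Md MU MF _.
pose Mx := [set z | exists2 m, M m & z <= (m `|` x)%O].
have ltMMx : M `<` Mx.
  split=> [z Mz|/(_ x) MxM]; first by exists z => //; apply: leUl.
  apply: nMx; apply: MxM; exists \bot; last by rewrite join0x.
  by apply: maximal_admissible_sup; case: idealI.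
apply: contrapT => noF; apply: (maxM ltMMx); split.
- by move=> z y zy [m Mm ym]; exists m => //; apply: le_trans ym.
- move=> z y [m Mm zm] [m' Mm' ym']; exists (m `|` m')%O; first exact: MU.
  rewrite leUx (le_trans zm) ?(le_trans ym') // leU2 ?leUl ?leUr //.
- by move=> z [m Mm zm] Fz; apply: noF; exists m => //; exists z.
- by right=> z /maximal_admissible_sup Mz; exists z => //; apply: leUl.
Qed.

Lemma maximal_admissible_prime : prime_ideal M.
Proof.
case: admM => Md MU MF _.
have MT : ~ M \top by move=> /MF; case: filterF.
split; split => //.
- by apply: maximal_admissible_sup; case: idealI.
- by move=> x y xy Mx My; apply: Mx; apply: Md xy My.
move=> x y /notin_maximal_admissible[m Mm [z Fz zm]].
move=> /notin_maximal_admissible[m' Mm' [z' Fz' zm']] Mxy.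
case: filterF => _ _ FI; apply: (MF (z `&` z')%O); last exact: FI.
apply: (Md _ ((m `|` m') `|` (x `&` y))%O); last first.
  by apply: (MU) => //; apply: MU.
rewrite joinIr leI2 // ?(le_trans zm) ?(le_trans zm') // leU2 ?leUl ?leUr //.
Qed.

End Maximal.

Theorem prime_ideal_theorem :
  exists p, [/\ prime_ideal p, I `<=` p & forall z, p z -> ~ F z].
Proof.
have [M [admM maxM]] := admissible_maximal_exists.
exists M; split; first exact: maximal_admissible_prime.
  exact: maximal_admissible_sup.
by case: admM.
Qed.

End PrimeIdealTheorem.

Section Spectrum.
Variables (d : Order.disp_t) (T : tbDistrLatticeType d).
Implicit Types (x y : T) (p : Spec T).

Lemma principal_ideal y : lattice_ideal [set z : T | z <= y].
Proof.
split=> /= [|x z xz zy|x z xy zy]; first exact: le0x.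
  exact: le_trans xz zy.
by rewrite leUx xy.
Qed.

Lemma principal_filter x : lattice_filter [set z : T | x <= z].
Proof.
split=> /= [|y z yz xy|y z xy xz]; first exact: lex1.
  exact: le_trans xy yz.
by rewrite lexI xy.
Qed.

Lemma prime_ideal_separate x y : ~ x <= y ->
  exists2 p : Spec T, D_open x p & ~ D_open y p.
Proof.
move=> nxy; have [|p [pp yp xp]] := prime_ideal_theorem (principal_ideal y)
  (principal_filter x).
  by move=> z /= zy xz; apply: nxy; apply: le_trans xz zy.
exists (exist _ p pp); rewrite /D_open /=.
  by move=> px; apply: (xp x px) => /=.
by move=> nyp; apply: nyp; apply: yp => /=.
Qed.

Lemma Spec_le p x y : x <= y -> sval p y -> sval p x.
Proof. by case: p => p /= [[_ pd _] _]; apply: pd. Qed.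

Lemma Spec_bot p : sval p \bot.
Proof. by case: p => p /= [[]]. Qed.

Lemma Spec_join p x y : sval p x -> sval p y -> sval p (x `|` y)%O.
Proof. by case: p => p /= [[_ _ pU] _]; apply: pU. Qed.

Lemma Spec_meetN p x y : ~ sval p x -> ~ sval p y -> ~ sval p (x `&` y)%O.
Proof. by case: p => p /= [_ [_ _ pI]]; apply: pI. Qed.

Lemma D_open_le x y : x <= y -> D_open x `<=` D_open y.
Proof. by move=> xy p px py; apply: px; apply: Spec_le xy py. Qed.

Lemma D_open_subsetP x y : D_open x `<=` D_open y <-> x <= y.
Proof.
split=> [xy|]; last exact: D_open_le.
by apply: contrapT => /prime_ideal_separate[p /xy].
Qed.

Lemma D_open0 : D_open \bot = set0 :> set (Spec T).
Proof. by apply/seteqP; split=> // p; apply; apply: Spec_bot. Qed.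

Lemma D_openU x y : D_open (x `|` y)%O = D_open x `|` D_open y.
Proof.
apply/seteqP; split=> [p pxy|p [px|py]].
- apply: contrapT => /not_orP[/contrapT px /contrapT py].
  by apply: pxy; apply: Spec_join.
- by apply: D_open_le px; apply: leUl.
- by apply: D_open_le py; apply: leUr.
Qed.

Lemma D_openI x y : D_open (x `&` y)%O = D_open x `&` D_open y.
Proof.
apply/seteqP; split=> [p pxy|p [px py]]; last exact: Spec_meetN.
by split; apply: D_open_le pxy; rewrite (leIl, leIr).
Qed.

End Spectrum.

Definition frobenius_adjoint d d' (T : meetSemilatticeType d)
    (T' : meetSemilatticeType d') (f : T -> T') (ft : T' -> T) :=
  forall a c b, (f a `&` b <= f c)%O <-> (a `&` ft b <= c)%O.

Section FrobeniusAdjoint.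
Variables (d d' : Order.disp_t) (T : tMeetSemilatticeType d)
  (T' : tMeetSemilatticeType d') (f : T -> T') (ft : T' -> T).
Hypotheses (f1 : f \top = \top) (adj_ft : frobenius_adjoint f ft).

Lemma frobenius_adjoint_galois c b : b <= f c <-> ft b <= c.
Proof. by have := adj_ft \top c b; rewrite f1 !meet1x. Qed.

Lemma frobenius_adjoint_meet a b : ft (f a `&` b)%O = (a `&` ft b)%O.
Proof.
apply: le_anti; apply/andP; split.
  by apply/frobenius_adjoint_galois; apply/adj_ft.
by apply/adj_ft; apply/frobenius_adjoint_galois.
Qed.

Lemma frobenius_adjoint_comp a : ft (f a) = (ft \top `&` a)%O.
Proof. by rewrite -[f a]meetx1 frobenius_adjoint_meet meetC. Qed.

End FrobeniusAdjoint.

Lemma is_glb_upset d (T : tbDistrLatticeType d) (S : set T) m :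
  (forall c, S c <-> m <= c) -> is_glb S m.
Proof. by move=> Sm; split=> [c /Sm //|m' /(_ m) lbm]; apply/lbm/Sm. Qed.

Lemma open_map_of_D_open d d' (T : tbDistrLatticeType d)
    (T' : tbDistrLatticeType d') (g : Spec T' -> Spec T) :
  (forall b, exists a, g @` D_open b = D_open a) -> open_map g.
Proof.
move=> gD U openU _ [q Uq <-]; have [b [Dbq DbU]] := openU q Uq.
have [a gDb] := gD b; exists a; rewrite -gDb; split; first by exists q.
exact: image_subset.
Qed.

Section SpecMap.
Variables (d d' : Order.disp_t) (T : tbDistrLatticeType d)
  (T' : tbDistrLatticeType d') (f : {lmorphism T -> T'}).
Hypotheses (f0 : f \bot = \bot) (f1 : f \top = \top).
Local Notation g := (Spec_map f0 f1).

Lemma image_ideal (J : set T) :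
  lattice_ideal J -> lattice_ideal [set y | exists2 c, J c & y <= f c].
Proof.
case=> J0 Jd JU; split.
- by exists \bot; rewrite ?f0.
- by move=> x y xy [c Jc yc]; exists c => //; apply: le_trans yc.
- move=> x y [c Jc xc] [c' Jc' yc']; exists (c `|` c')%O; first exact: JU.
  by rewrite omorphU leU2.
Qed.

Lemma image_meet_filter (G : set T) b : lattice_filter G ->
  lattice_filter [set y | exists2 a, G a & (f a `&` b)%O <= y].
Proof.
case=> G1 Gu GI; split.
- by exists \top; rewrite ?lex1.
- by move=> x y xy [a Ga ax]; exists a => //; apply: le_trans xy.
- move=> x y [a Ga ax] [a' Ga' ay]; exists (a `&` a')%O; first exact: GI.
  rewrite lexI omorphI (le_trans _ ax) ?(le_trans _ ay) //.
  + by rewrite leI2 ?leIr.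
  + by rewrite leI2 ?leIl.
Qed.

Lemma Spec_map_D_open_le a b : b <= f a -> g @` D_open b `<=` D_open a.
Proof. by move=> bfa _ [q Dq <-] qfa; apply: Dq; apply: Spec_le bfa qfa. Qed.

Section Adjoint.
Variables (ft : T' -> T) (adj_ft : frobenius_adjoint f ft).

(* A prime [q] of [T'] lying over [p] and avoiding [b] exists because, by
   [adj_ft], the ideal generated by [f p] misses the filter generated by
   [f (~` p) `&` b]. *)
Lemma D_open_sub_Spec_map_image b : D_open (ft b) `<=` g @` D_open b.
Proof.
case=> P primeP DP; pose p : Spec T := exist _ P primeP.
have nPT : ~ P \top := D_open_le (lex1 (ft b)) DP.
have [|q [primeq Iq qF]] := prime_ideal_theorem (image_ideal primeP.1)
  (image_meet_filter b primeP.2).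
  move=> y [c Pc yc] [a nPa ay].
  have : ~ P (a `&` ft b)%O := Spec_meetN (p := p) nPa DP.
  by apply; apply: (Spec_le (p := p)) Pc; apply/adj_ft/(le_trans ay yc).
exists (exist _ q primeq).
  by move=> qb; apply: (qF b qb); exists \top; rewrite ?f1 ?meet1x.
apply: eq_exist; apply/seteqP; split=> x /=.
  move=> qfx; apply: contrapT => nPx.
  by apply: (qF _ qfx); exists x; rewrite ?leIl.
by move=> Px; apply: Iq; exists x.
Qed.

End Adjoint.

Lemma Spec_map_D_openP ft :
  frobenius_adjoint f ft <-> forall b, g @` D_open b = D_open (ft b).
Proof.
split=> [adj b|gD a c b].
  apply/seteqP; split; last exact: D_open_sub_Spec_map_image.
  by apply: Spec_map_D_open_le; apply/(frobenius_adjoint_galois f1 adj).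
split=> /D_open_subsetP sub; apply/D_open_subsetP.
  rewrite D_openI in sub; rewrite (D_openI a) -gD => p [Dap [q Dbq qp]].
  by rewrite -qp in Dap *; apply: sub.
rewrite (D_openI a) in sub; rewrite (D_openI (f a)) => q [Dfaq Dbq].
by apply: (sub (g q)); split=> //; rewrite -gD; exists q.
Qed.

(* [D_open b] is compact: the prime ideal theorem shows that [b] lies in the
   ideal generated by the [f a] with [D_open a] inside the open image. *)
Lemma open_map_Spec_map_D_open :
  open_map g -> forall b, exists a, g @` D_open b = D_open a.
Proof.
move=> openg b; set V := g @` D_open b.
have openV : spec_open V by apply: openg => q Dbq; exists b; split.
pose J := [set a | D_open a `<=` V].
have idealJ : lattice_ideal J.
  split=> [|x y /D_open_le xy Jy|x y Jx Jy]; rewrite /J /=.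
  - by rewrite D_open0; apply: sub0set.
  - exact: subset_trans Jy.
  - by rewrite D_openU subUset.
have [a Ja bfa] : exists2 a, J a & b <= f a.
  apply: contrapT => nKb.
  have [|q [primeq Kq qb]] := prime_ideal_theorem (image_ideal idealJ)
    (principal_filter b).
    move=> y [a Ja ya] bly.
    by apply: nKb; exists a => //; apply: le_trans bly ya.
  have [|a [Da DaV]] := openV (g (exist _ q primeq)).
    by exists (exist _ q primeq) => // qb'; apply: (qb b qb') => /=.
  by apply: Da; apply: Kq; exists a.
by exists a; apply/seteqP; split; [apply: Spec_map_D_open_le | apply: Ja].
Qed.

End SpecMap.

Theorem theorem8 (d d' : Order.disp_t) (T : tbDistrLatticeType d)
  (T' : tbDistrLatticeType d') (f : {lmorphism T -> T'})
  (f0 : f \bot = \bot) (f1 : f \top = \top) :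
  let prop_b (ft : T' -> T) :=
    forall (a c : T) (b : T'), (Order.meet (f a) b <= f c) <-> (Order.meet a (ft b) <= c) in
  [<-> open_map (Spec_map f0 f1);
       exists ft : T' -> T,
         [/\ (forall (c : T) (b : T'), b <= f c <-> ft b <= c),
             prop_b ft,
             (forall (a : T) (b : T'), ft (Order.meet (f a) b) = Order.meet a (ft b)) &
             (forall a : T, ft (f a) = Order.meet (ft \top) a)];
       exists ft : T' -> T, prop_b ft;
       exists ft : T' -> T,
         (forall b : T', is_glb [set c : T | b <= f c] (ft b)) /\ prop_b ft].
Proof.
move=> prop_b; tfae.
- move=> /open_map_Spec_map_D_open /choice[ft /Spec_map_D_openP adj].
  exists ft; split=> [c b||a b|a].
  + exact: frobenius_adjoint_galois.
  + exact: adj.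
  + exact: frobenius_adjoint_meet.
  + exact: frobenius_adjoint_comp.
- by move=> [ft [_ adj _ _]]; exists ft.
- move=> [ft adj]; exists ft; split=> // b.
  by apply: is_glb_upset => c; apply: frobenius_adjoint_galois.
- move=> [ft [_ /Spec_map_D_openP adj]]; apply: open_map_of_D_open => b.
  by exists (ft b).
Qed.
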